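(* For every integer $n\ge 0$, \[ p_n(x) = 2^n\sum_{k=0}^n\binom{n+1}{k} F_{n-k}(x,1/2)\,F_k(x,1/2). \]
   Context: Define polynomial sequences $(p_k(x))_{k\ge -1}$ and $(q_k(x))_{k\ge -1}$ by $p_{-1}(x)=0$, $q_{-1}(x)=1$ and, for $k\ge -1$, $p_{k+1}(x) = 2(kx+1)p_k(x) + 2x(1-x)p_k'(x) + q_k(x)$, $q_{k+1}(x) = (2(k+1)x+1)q_k(x) + 2x(1-x)q_k'(x)$. For a permutation $\pi=\pi_1\cdots\pi_n$ of $[n]=\{1,\dots,n\}$, let $\mathrm{exc}(\pi)=|\{i\in[n]:\pi_i>i\}|$ and $\mathrm{cyc}(\pi)$ the number of cycles in its disjoint cycle decomposition. The bivariate Eulerian polynomials are $F_0(x,y)=1$ and $F_n(x,y)=\sum_{\pi\in\mathfrak S_n} x^{\mathrm{exc}(\pi)}y^{\mathrm{cyc}(\pi)}$ for $n>0$, where $\mathfrak S_n$ is the symmetric group on $[n]$; their exponential generating function is $\sum_{n\ge0}F_n(x,y)t^n/n! = \left(\frac{1-x}{e^{t(x-1)}-x}\right)^y$. *)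

From HB Require Import structures.
From mathcomp Require Import all_boot all_order all_algebra all_fingroup.
Set Implicit Arguments. Unset Strict Implicit. Unset Printing Implicit Defensive.
Import GRing.Theory.
Local Open Scope ring_scope.

(* Index shift: pq m = (p_{m-1}, q_{m-1}), so pq 0 = (p_{-1}, q_{-1}) = (0, 1). *)
Fixpoint pq (m : nat) : {poly rat} * {poly rat} :=
  match m with
  | 0 => (0, 1)
  | m'.+1 =>
      let: (p, q) := pq m' in
      let k : rat := (m'%:Z - 1)%:~R in
      (2%:R * (k *: 'X + 1) * p + 2%:R * 'X * (1 - 'X) * p^`() + q,
       (2%:R * (m'%:R *: 'X) + 1) * q + 2%:R * 'X * (1 - 'X) * q^`())
  end.

Definition p_shift (m : nat) : {poly rat} := (pq m).1.
Definition q_shift (m : nat) : {poly rat} := (pq m).2.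

(* excedances of a permutation of [n] (0-based: s i > i iff pi_{i+1} > i+1) *)
Definition exc n (s : {perm 'I_n}) : nat := #|[set i : 'I_n | (i < s i)%N]|.
(* number of cycles in the disjoint cycle decomposition (fixed points included) *)
Definition cyc n (s : {perm 'I_n}) : nat := #|porbits s|.

Definition F (n : nat) (y : rat) : {poly rat} :=
  if n is 0 then 1
  else \sum_(s : {perm 'I_n}) (y ^+ cyc s) *: 'X^(exc s).

From HB Require Import structures.
From mathcomp Require Import all_boot all_order all_algebra all_fingroup.
From mathcomp Require Import zify ring.
Set Implicit Arguments. Unset Strict Implicit. Unset Printing Implicit Defensive.
Import GRing.Theory.
Local Open Scope ring_scope.

(* Inserting a new point into a permutation of [n], either as a fixed point or
   right after some [j], yields the recurrence
   F_{n+1}(x,y) = (y + n x) F_n(x,y) + x (1 - x) F_n'(x,y),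
   so H_m := 2^m F_m(x,1/2) satisfies the recurrence of q_{m-1}.  On a product
   H_a H_b with a + b = n, the operator 2(nx+1) + 2x(1-x) d/dx of the recurrence
   of p_n gives H_{a+1} H_b + H_a H_{b+1} by the Leibniz rule, and Pascal's rule
   reassembles the binomial convolution of the H_m at rank n + 1. *)

Lemma card_porbits1 (T : finType) : #|porbits (1 : {perm T})| = #|T|.
Proof.
rewrite card_imset // => x y /eqP; rewrite eq_porbit_mem.
by rewrite porbit.unlock cycle1 imset_set1 /aperm perm1 inE => /eqP.
Qed.

Lemma widen_lift_max n (k : 'I_n) : widen_ord (leqnSn n) k = lift ord_max k.
Proof. by apply: val_inj; rewrite /= /bump leqNgt ltn_ord. Qed.

Section ExtPerm.
Variable n : nat.
Local Notation L := (lift_perm (@ord_max n) (@ord_max n)).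

(* [ext_perm j t] inserts the new point right after [j] in its cycle of [t],
   or as a fixed point when [j] is the new point itself. *)
Definition ext_perm (j : 'I_n.+1) (t : 'S_n) : 'S_n.+1 :=
  (tperm j ord_max * L t)%g.

Lemma ext_perm_pivot j t : ext_perm j t j = ord_max.
Proof. by rewrite permM tpermL lift_perm_id. Qed.

Lemma ext_perm_lift j t k : ext_perm j t (lift ord_max k) =
  if lift ord_max k == j then ord_max else lift ord_max (t k).
Proof.
rewrite permM; case: eqP => [->|/eqP ne]; first by rewrite tpermL lift_perm_id.
by rewrite tpermD ?lift_perm_lift // ?neq_lift // eq_sym.
Qed.

Lemma ext_perm_bij : bijective (fun p : 'I_n.+1 * 'S_n => ext_perm p.1 p.2).
Proof.
apply: inj_card_bij; last by rewrite card_prod !card_Sn card_ord factS.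
move=> [j1 t1] [j2 t2] /= E.
have ej : j1 = j2.
  apply: (@perm_inj _ (ext_perm j1 t1)).
  by rewrite ext_perm_pivot E ext_perm_pivot.
subst j2; congr pair; apply/permP => k; apply: (@lift_inj _ ord_max).
by rewrite -!(lift_perm_lift ord_max ord_max) (mulgI _ _ _ E).
Qed.

Lemma big_perm_ext (R : nmodType) (f : 'S_n.+1 -> R) :
  \sum_(s : 'S_n.+1) f s = \sum_(j : 'I_n.+1) \sum_(t : 'S_n) f (ext_perm j t).
Proof. by rewrite (reindex _ (onW_bij _ ext_perm_bij)) pair_big. Qed.

Lemma lift_permX t i : (L t ^+ i)%g = L (t ^+ i)%g.
Proof.
elim: i => [|i IH]; first by rewrite !expg0 lift_perm1.
by rewrite !expgS IH lift_permM.
Qed.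

Lemma porbit_lift_perm t a b :
  (lift ord_max a \in porbit (L t) (lift ord_max b)) = (a \in porbit t b).
Proof.
by apply/porbitP/porbitP => -[i E]; exists i;
  [apply: (@lift_inj _ ord_max) | ]; rewrite E lift_permX lift_perm_lift.
Qed.

Lemma lift_perm_tperm a b :
  L (tperm a b) = tperm (lift ord_max a) (lift ord_max b).
Proof.
apply/permP => k; case: (unliftP ord_max k) => [k'|] ->.
  by rewrite lift_perm_lift inj_tperm //; apply: lift_inj.
by rewrite lift_perm_id tpermD // eq_sym neq_lift.
Qed.

(* Induction on a factorisation into transpositions: multiplying by a
   transposition changes the number of cycles of [t] and of [L t] alike. *)
Lemma cyc_lift_perm t : cyc (L t) = (cyc t).+1.
Proof.
case: (prod_tpermP t) => ts -> _; elim: ts => [|[a b] ts IH].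
  by rewrite !big_nil lift_perm1 /cyc !card_porbits1 !card_ord.
rewrite !big_cons /=; set u := (\prod_(_ <- _) _)%g in IH *.
rewrite -(lift_permM ord_max ord_max ord_max) lift_perm_tperm.
have := porbits_mul_tperm u a b.
have := porbits_mul_tperm (L u) (lift ord_max a) (lift ord_max b).
rewrite porbit_lift_perm (inj_eq (@lift_inj _ ord_max)) /cyc in IH *.
set d := (_ \notin _).*2 => Lab Lu.
by apply/eqP; rewrite -(eqn_add2r d) Lab IH !addSn Lu.
Qed.

Lemma cyc_ext_perm j t : cyc (ext_perm j t) = (cyc t + (j == ord_max))%N.
Proof.
have := porbits_mul_tperm (L t) j ord_max.
have -> : (j \in porbit (L t) ord_max) = (j == ord_max).
  apply/porbitP/eqP => [[i ->]|->]; last by exists 0; rewrite expg0 perm1.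
  by rewrite permX_fix // lift_perm_id.
rewrite /= -/(ext_perm j t) -[#|porbits (L t)|]/(cyc (L t)) cyc_lift_perm.
rewrite -/(cyc (ext_perm j t)); case: (j == ord_max) => /=; lia.
Qed.

End ExtPerm.

Lemma exc_sum m (s : 'S_m) : exc s = (\sum_(i : 'I_m) (i < s i))%N.
Proof.
rewrite /exc -sum1_card big_mkcond /=; apply: eq_bigr => i _.
by rewrite inE; case: (_ < _)%N.
Qed.

Lemma exc_leq m (s : 'S_m) : (exc s <= m)%N.
Proof. by rewrite /exc (leq_trans (max_card _)) ?card_ord. Qed.

Lemma exc_ext_perm n (j : 'I_n.+1) (t : 'S_n) : exc (ext_perm j t) =
  (\sum_(k : 'I_n) (if lift ord_max k == j then 1 else (k < t k)%N))%N.
Proof.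
rewrite exc_sum big_ord_recr /= ltnNge -ltnS ltn_ord addn0.
apply: eq_bigr => k _; rewrite widen_lift_max ext_perm_lift.
by case: eqP => _; rewrite /= ?ltn_ord // /bump (leqNgt n) ltn_ord.
Qed.

Lemma exc_ext_perm_max n (t : 'S_n) : exc (ext_perm ord_max t) = exc t.
Proof.
rewrite exc_ext_perm exc_sum; apply: eq_bigr => k _.
by rewrite eq_sym (negbTE (neq_lift _ _)).
Qed.

Lemma exc_ext_perm_lift n (k : 'I_n) (t : 'S_n) :
  exc (ext_perm (lift ord_max k) t) = (exc t + ~~ (k < t k))%N.
Proof.
rewrite exc_ext_perm exc_sum (bigD1 k) //= eqxx [in RHS](bigD1 k) //=.
rewrite (eq_bigr (fun i : 'I_n => (i < t i)%N : nat)) => [|i /negbTE ne_ik].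
  by case: (k < t k)%N; rewrite ?addn0 // add0n addnC.
by rewrite (inj_eq (@lift_inj _ ord_max)) ne_ik.
Qed.

Lemma sum_Xn_addn_negb (R : nzRingType) n (b : 'I_n -> bool) m :
  \sum_(k < n) 'X^(m + ~~ b k) =
  ((\sum_k b k)%N)%:R *: 'X^m + ((n - \sum_k b k)%N)%:R *: 'X^(m.+1) :> {poly R}.
Proof.
have -> : (n - \sum_k b k = \sum_k ~~ b k)%N.
  apply/eqP; rewrite -(eqn_add2l (\sum_k b k)) subnKC -?big_split /=.
    rewrite -[n in n == _]card_ord -sum1_card.
    by apply/eqP/eq_bigr => k _; case: (b k).
  by rewrite -[n in (_ <= n)%N]card_ord -sum1_card leq_sum // => k _; case: (b k).
rewrite !natr_sum !scaler_suml -big_split /=; apply: eq_bigr => k _.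
by case: (b k); rewrite ?addn0 ?addn1 ?scale1r ?scale0r ?addr0 ?add0r.
Qed.

Lemma F_sum n y : F n y = \sum_(s : 'S_n) (y ^+ cyc s) *: 'X^(exc s).
Proof.
case: n => [|n] //.
rewrite (big_pred1 1%g) => [|s]; last by rewrite /= permS0 eqxx.
have -> : exc (1%g : 'S_0) = 0%N by apply/eqP; rewrite -leqn0 exc_leq.
by rewrite /cyc card_porbits1 card_ord expr0 scale1r.
Qed.

Lemma F_rec n y :
  F n.+1 y = (y%:P + n%:R *: 'X) * F n y + 'X * (1 - 'X) * (F n y)^`().
Proof.
rewrite !F_sum big_perm_ext big_ord_recr /= exchange_big -big_split /=.
rewrite linear_sum /= !mulr_sumr -big_split /=; apply: eq_bigr => t _.
under eq_bigr => k _ do rewrite widen_lift_max cyc_ext_perm exc_ext_perm_lift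
  eq_sym (negbTE (neq_lift _ _)) addn0.
rewrite -scaler_sumr sum_Xn_addn_negb -exc_sum cyc_ext_perm exc_ext_perm_max eqxx.
rewrite derivZ -!scalerAr exprD expr1 -scalerA -!scalerDr; congr (_ *: _).
rewrite derivXn natrB ?exc_leq // -!mul_polyC !polyCB.
by case: (exc t) => [|e]; rewrite /= ?exprS; ring.
Qed.

Section Convolution.
Variable R : comNzRingType.
Variable H : nat -> {poly R}.
Hypothesis H0 : H 0 = 1.
Hypothesis HS : forall m,
  H m.+1 = (1 + (2 * m)%:R *: 'X) * H m + 2%:R * 'X * (1 - 'X) * (H m)^`().

Definition binom_conv n : {poly R} :=
  \sum_(k < n.+1) ('C(n.+1, k))%:R * (H (n - k) * H k).

Lemma HS_mul c a b :
  2%:R * ((a + b)%:R *: 'X + 1) * (c%:R * (H a * H b))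
    + 2%:R * 'X * (1 - 'X) * (c%:R * (H a * H b))^`()
  = c%:R * (H a.+1 * H b + H a * H b.+1).
Proof.
rewrite -[c%:R]polyC_natr !derivM derivC !HS -!mul_polyC !polyC_natr !natrM natrD.
ring.
Qed.

Lemma binom_conv_shift n :
  \sum_(k < n.+1) ('C(n.+1, k))%:R * (H (n - k).+1 * H k)
  = \sum_(k < n.+1) ('C(n.+1, k.+1))%:R * (H (n - k) * H k.+1).
Proof.
rewrite big_ord_recl big_ord_recr /= subn0 subnn bin0 binn H0 !mul1r mulr1.
by rewrite addrC; congr (_ + _); apply: eq_bigr => k _; rewrite subnSK.
Qed.

Lemma binom_conv_rec n : binom_conv n.+1 =
  2%:R * (n%:R *: 'X + 1) * binom_conv n
    + 2%:R * 'X * (1 - 'X) * (binom_conv n)^`() + H n.+1.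
Proof.
rewrite /binom_conv linear_sum /= !mulr_sumr -big_split /=.
under [in RHS]eq_bigr => k _ do
  rewrite -[n in n%:R *: _](subnK (ltn_ord k : (k <= n)%N)) HS_mul.
rewrite /= big_ord_recl subn0 bin0 H0 mul1r mulr1 /=.
under eq_bigr => k _ do rewrite /bump add1n binS natrD mulrDl subSS.
under [in RHS]eq_bigr => k _ do rewrite mulrDr.
by rewrite !big_split /= binom_conv_shift [LHS]addrC.
Qed.

End Convolution.

Definition Fhalf m : {poly rat} := 2%:R ^+ m *: F m (1 / 2%:R).

Lemma Fhalf0 : Fhalf 0 = 1.
Proof. by rewrite /Fhalf expr0 scale1r. Qed.

Lemma Fhalf_rec m : Fhalf m.+1 =
  (1 + (2 * m)%:R *: 'X) * Fhalf m + 2%:R * 'X * (1 - 'X) * (Fhalf m)^`().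
Proof.
rewrite /Fhalf F_rec exprSr -scalerA derivZ -!scalerAr -scalerDr; congr (_ *: _).
have half2 : 2%:R * (1 / 2%:R)%:P = 1 :> {poly rat}.
  by rewrite -polyC_natr -polyCM mulrC divfK.
rewrite -!mul_polyC !polyC_natr natrM (mulrDr 2) mulrA mulrDr mulrDl mulrA half2.
ring.
Qed.

Lemma p_shiftS n : p_shift n.+1 =
  2%:R * ((n%:Z - 1)%:~R *: 'X + 1) * p_shift n
    + 2%:R * 'X * (1 - 'X) * (p_shift n)^`() + q_shift n.
Proof. by rewrite /p_shift /q_shift /=; case: (pq n). Qed.

Lemma q_shiftS n : q_shift n.+1 =
  (2%:R * (n%:R *: 'X) + 1) * q_shift n + 2%:R * 'X * (1 - 'X) * (q_shift n)^`().
Proof. by rewrite /q_shift /=; case: (pq n). Qed.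

Lemma q_shift_Fhalf n : q_shift n = Fhalf n.
Proof.
elim: n => [|n IH]; first by rewrite Fhalf0.
by rewrite q_shiftS Fhalf_rec IH -!mul_polyC !polyC_natr natrM; ring.
Qed.

Lemma p_shift_binom_conv n : p_shift n.+1 = binom_conv Fhalf n.
Proof.
elim: n => [|n IH].
  by rewrite p_shiftS /binom_conv big_ord1 q_shift_Fhalf Fhalf0 !mulr0 deriv0
    !mulr0 !add0r bin0 !mul1r.
rewrite p_shiftS IH q_shift_Fhalf (binom_conv_rec Fhalf0 Fhalf_rec).
suff -> : (n.+1%:Z - 1)%:~R = n%:R :> rat by [].
by rewrite -addn1 PoszD addrK.
Qed.

Theorem theorem3p7 (n : nat) :
  p_shift n.+1 =
  2%:R ^+ n * \sum_(0 <= k < n.+1)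
     ('C(n.+1, k))%:R * (F (n - k) (1 / 2%:R) * F k (1 / 2%:R)).
Proof.
rewrite p_shift_binom_conv big_mkord mulr_sumr; apply: eq_bigr => k _.
have split2n : 2%:R ^+ n = 2%:R ^+ (n - k) * 2%:R ^+ k :> {poly rat}.
  by rewrite -exprD subnK // -ltnS.
rewrite /Fhalf -!mul_polyC !rmorphXn /= !polyC_natr split2n; ring.
Qed.
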